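(* Let $\mathcal U=(V,\tilde V,W,\tilde W,R)$ be an ordered gradient space and $V_0=\{u\in V: u\le v\text{ for some }v\in V_+\}$. Then $V_0$ is a lattice (with the order $\le$) if and only if $V_+$ is a lattice. In this case, for all $u_1,u_2\in V_+$, the $V_+$-least upper bound $\max(u_1,u_2)$ satisfies $\max(u_1,u_2)\le v$ for every $v\in V$ with $v\ge u_1$ and $v\ge u_2$, and the $V_+$-greatest lower bound $\min(u_1,u_2)$ satisfies $\min(u_1,u_2)\ge v$ for every $v\in V$ with $v\le u_1$ and $v\le u_2$.
   Context: A gradient space $\mathcal U=(V,\tilde V,W,\tilde W,R)$ consists of vector spaces $\tilde V,\tilde W$ over $\mathbf R$ or $\mathbf C$, a relation $R\subseteq\tilde V\times\tilde W$ closed under addition and under multiplication by positive scalars, and linear subspaces $V\subseteq\tilde V$, $W\subseteq\tilde W$ such that $V$ is a reflexive Banach space (norm $\|\cdot\|_V$), $W$ is a reflexive strictly convex Banach space, for every $(u,g)\in R\cap(V\times W)$ there is $g'\in W$ with $(-u,g')\in R$, and $R\cap(V\times W)$ is closed in $V\times W$. A linear preorder on $\tilde V$ is a relation $\le$ with: $a\le a$; $a\le b,\ b\le c\Rightarrow a\le c$; $b\le c\Rightarrow a+b\le a+c$; $a\le b,\ \alpha\in[0,\infty)\Rightarrow\alpha a\le\alpha b$. A preordered gradient space is a gradient space with a linear preorder $\le$ on $\tilde V$ such that if $u_i\in V$, $\psi\in\tilde V$, $u_i\le\psi$ for all $i$ and $u_i\to u$ in $V$, then $u\le\psi$. An ordered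 gradient space is a preordered gradient space such that $V$ is strictly convex and, for $u,v\in V$, $0\le u\le v$ implies $\|u\|_V\le\|v\|_V$ (then $\le$ is a partial order on $V$). Let $V_+=\{v\in V:v\ge0\}$. For $u_1,u_2\in V_+$: $\max(u_1,u_2)$ is the unique element $u$ of $\{u\in V:u\ge u_1,\ u\ge u_2\}$ of least $V$-norm; $\min(u_1,u_2)$ is the unique element of $\{v\in V:0\le v\le u_1,\ v\le u_2\}$ minimizing $\|\max(u_1,u_2)-v\|_V$. A subset $A\subseteq V$ is a lattice if every pair of elements of $A$ has a least upper bound and a greatest lower bound within $A$ (with respect to $\le$); $V_+$-least upper bounds and $V_+$-greatest lower bounds mean least upper / greatest lower bounds taken within $V_+$. *)

From Stdlib Require Import Reals.
Open Scope R_scope.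

Record RVS := {
  vs_car :> Type;
  vs_zero : vs_car;
  vs_add : vs_car -> vs_car -> vs_car;
  vs_opp : vs_car -> vs_car;
  vs_scal : R -> vs_car -> vs_car;
  vs_addA : forall x y z, vs_add x (vs_add y z) = vs_add (vs_add x y) z;
  vs_addC : forall x y, vs_add x y = vs_add y x;
  vs_add0 : forall x, vs_add x vs_zero = x;
  vs_addN : forall x, vs_add x (vs_opp x) = vs_zero;
  vs_scal1 : forall x, vs_scal 1 x = x;
  vs_scalA : forall a b x, vs_scal a (vs_scal b x) = vs_scal (a * b) x;
  vs_scalDr : forall a x y, vs_scal a (vs_add x y) = vs_add (vs_scal a x) (vs_scal a y);
  vs_scalDl : forall a b x, vs_scal (a + b) x = vs_add (vs_scal a x) (vs_scal b x)
}.

Arguments vs_zero {_}.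
Arguments vs_add {_}.
Arguments vs_opp {_}.
Arguments vs_scal {_}.

Definition vs_sub {X : RVS} (x y : X) : X := vs_add x (vs_opp y).

Record NormedSubspace (X : RVS) := {
  ns_mem : X -> Prop;
  ns_norm : X -> R;
  ns_mem0 : ns_mem vs_zero;
  ns_memD : forall x y, ns_mem x -> ns_mem y -> ns_mem (vs_add x y);
  ns_memZ : forall a x, ns_mem x -> ns_mem (vs_scal a x);
  ns_norm_ge0 : forall x, ns_mem x -> 0 <= ns_norm x;
  ns_norm_eq0 : forall x, ns_mem x -> ns_norm x = 0 -> x = vs_zero;
  ns_normZ : forall a x, ns_mem x -> ns_norm (vs_scal a x) = Rabs a * ns_norm x;
  ns_normD : forall x y, ns_mem x -> ns_mem y ->
     ns_norm (vs_add x y) <= ns_norm x + ns_norm y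
}.

Arguments ns_mem {_}.
Arguments ns_norm {_}.

Definition ns_converges {X : RVS} (V : NormedSubspace X) (x : nat -> X) (l : X) : Prop :=
  ns_mem V l /\ (forall n, ns_mem V (x n)) /\
  forall eps, eps > 0 -> exists N, forall n, (n >= N)%nat -> ns_norm V (vs_sub (x n) l) < eps.

Definition ns_cauchy {X : RVS} (V : NormedSubspace X) (x : nat -> X) : Prop :=
  (forall n, ns_mem V (x n)) /\
  forall eps, eps > 0 -> exists N, forall n m, (n >= N)%nat -> (m >= N)%nat ->
     ns_norm V (vs_sub (x n) (x m)) < eps.

Definition ns_complete {X : RVS} (V : NormedSubspace X) : Prop :=
  forall x, ns_cauchy V x -> exists l, ns_converges V x l.

(** Bounded linear functionals on V (values off V are irrelevant). *)
Definition ns_linear_on {X : RVS} (V : NormedSubspace X) (f : X -> R) : Prop :=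
  (forall x y, ns_mem V x -> ns_mem V y -> f (vs_add x y) = f x + f y) /\
  (forall a x, ns_mem V x -> f (vs_scal a x) = a * f x).

Definition ns_fbound {X : RVS} (V : NormedSubspace X) (f : X -> R) (M : R) : Prop :=
  forall x, ns_mem V x -> Rabs (f x) <= M * ns_norm V x.

Definition ns_dual {X : RVS} (V : NormedSubspace X) (f : X -> R) : Prop :=
  ns_linear_on V f /\ exists M, ns_fbound V f M.

Definition ns_bidual {X : RVS} (V : NormedSubspace X) (Phi : (X -> R) -> R) : Prop :=
  (forall f g, ns_dual V f -> ns_dual V g -> Phi (fun x => f x + g x) = Phi f + Phi g) /\
  (forall a f, ns_dual V f -> Phi (fun x => a * f x) = a * Phi f) /\
  (exists C, forall f M, ns_dual V f -> ns_fbound V f M -> Rabs (Phi f) <= C * M).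

Definition ns_reflexive {X : RVS} (V : NormedSubspace X) : Prop :=
  forall Phi, ns_bidual V Phi ->
    exists v, ns_mem V v /\ forall f, ns_dual V f -> Phi f = f v.

Definition ns_banach {X : RVS} (V : NormedSubspace X) : Prop := ns_complete V.

Definition ns_strictly_convex {X : RVS} (V : NormedSubspace X) : Prop :=
  forall x y, ns_mem V x -> ns_mem V y -> ns_norm V x = 1 -> ns_norm V y = 1 ->
    x <> y -> ns_norm V (vs_scal (1/2) (vs_add x y)) < 1.

Record GradientSpace := {
  gs_Vt : RVS;
  gs_Wt : RVS;
  gs_V : NormedSubspace gs_Vt;
  gs_W : NormedSubspace gs_Wt;
  gs_R : gs_Vt -> gs_Wt -> Prop;
  gs_R_add : forall u g u' g', gs_R u g -> gs_R u' g' -> gs_R (vs_add u u') (vs_add g g');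
  gs_R_scal : forall a u g, a > 0 -> gs_R u g -> gs_R (vs_scal a u) (vs_scal a g);
  gs_V_banach : ns_banach gs_V;
  gs_V_reflexive : ns_reflexive gs_V;
  gs_W_banach : ns_banach gs_W;
  gs_W_reflexive : ns_reflexive gs_W;
  gs_W_strictly_convex : ns_strictly_convex gs_W;
  gs_R_neg : forall u g, ns_mem gs_V u -> ns_mem gs_W g -> gs_R u g ->
      exists g', ns_mem gs_W g' /\ gs_R (vs_opp u) g';
  gs_R_closed : forall (u : nat -> gs_Vt) (g : nat -> gs_Wt) u0 g0,
      (forall n, gs_R (u n) (g n)) -> ns_converges gs_V u u0 -> ns_converges gs_W g g0 ->
      gs_R u0 g0
}.

Definition linear_preorder (X : RVS) (le : X -> X -> Prop) : Prop :=
  (forall a, le a a) /\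
  (forall a b c, le a b -> le b c -> le a c) /\
  (forall a b c, le b c -> le (vs_add a b) (vs_add a c)) /\
  (forall a b (al : R), le a b -> 0 <= al -> le (vs_scal al a) (vs_scal al b)).

Definition preordered_gradient_space (U : GradientSpace) (le : gs_Vt U -> gs_Vt U -> Prop) : Prop :=
  linear_preorder (gs_Vt U) le /\
  forall (u : nat -> gs_Vt U) (psi u0 : gs_Vt U),
    (forall i, le (u i) psi) -> ns_converges (gs_V U) u u0 -> le u0 psi.

Definition ordered_gradient_space (U : GradientSpace) (le : gs_Vt U -> gs_Vt U -> Prop) : Prop :=
  preordered_gradient_space U le /\
  ns_strictly_convex (gs_V U) /\
  forall u v, ns_mem (gs_V U) u -> ns_mem (gs_V U) v ->
    le vs_zero u -> le u v -> ns_norm (gs_V U) u <= ns_norm (gs_V U) v.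

Definition Vplus (U : GradientSpace) (le : gs_Vt U -> gs_Vt U -> Prop) (v : gs_Vt U) : Prop :=
  ns_mem (gs_V U) v /\ le vs_zero v.

Definition Vzero (U : GradientSpace) (le : gs_Vt U -> gs_Vt U -> Prop) (u : gs_Vt U) : Prop :=
  ns_mem (gs_V U) u /\ exists v, Vplus U le v /\ le u v.

Definition is_lub_in {X : Type} (le : X -> X -> Prop) (A : X -> Prop) (a b c : X) : Prop :=
  A c /\ le a c /\ le b c /\ forall d, A d -> le a d -> le b d -> le c d.

Definition is_glb_in {X : Type} (le : X -> X -> Prop) (A : X -> Prop) (a b c : X) : Prop :=
  A c /\ le c a /\ le c b /\ forall d, A d -> le d a -> le d b -> le d c.

Definition is_lattice {X : Type} (le : X -> X -> Prop) (A : X -> Prop) : Prop :=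
  forall a b, A a -> A b ->
    (exists c, is_lub_in le A a b c) /\ (exists c, is_glb_in le A a b c).

From Stdlib Require Import Reals.
Open Scope R_scope.

(* Everything rests on translation
   invariance: an element of V_0 is moved into V_+ by adding a suitable
   nonnegative vector t, and bounds are transported back by subtracting t.
   The one genuine point is that a V_+-greatest lower bound m of x, y also
   dominates every w in V below x and y: with s = x - w >= 0, the element
   w + s = x lies in V_+ below x + s and y + s, hence below their V_+-glb g,
   while g - s is in V_+ below x and y, hence below m. *)

Lemma is_lub_in_sub {T : Type} (le : T -> T -> Prop) (A B : T -> Prop) a b c :
  (forall x, A x -> B x) -> A c -> is_lub_in le B a b c -> is_lub_in le A a b c.
Proof.
intros AB Ac [_ [Hac [Hbc Hc]]].
repeat split; auto.
Qed.

Lemma is_glb_in_sub {T : Type} (le : T -> T -> Prop) (A B : T -> Prop) a b c :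
  (forall x, A x -> B x) -> A c -> is_glb_in le B a b c -> is_glb_in le A a b c.
Proof. exact (is_lub_in_sub (fun x y => le y x) A B a b c). Qed.

Section VectorSpace.
Context {X : RVS}.
Implicit Types a b c d t x y : X.

Lemma vs_add0l x : vs_add vs_zero x = x.
Proof. rewrite vs_addC. apply vs_add0. Qed.

Lemma vs_addK x t : vs_sub (vs_add x t) t = x.
Proof. unfold vs_sub. rewrite <- vs_addA, vs_addN. apply vs_add0. Qed.

Lemma vs_subK x t : vs_add (vs_sub x t) t = x.
Proof.
unfold vs_sub. rewrite <- vs_addA, (vs_addC _ (vs_opp t)), vs_addN.
apply vs_add0.
Qed.

Lemma vs_addIl x y z : vs_add x y = vs_add x z -> y = z.
Proof.
intro E.
rewrite <- (vs_addK y x), <- (vs_addK z x), (vs_addC _ y), (vs_addC _ z), E.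
reflexivity.
Qed.

Lemma vs_scal0 x : vs_scal 0 x = vs_zero.
Proof.
apply (vs_addIl (vs_scal 0 x)).
rewrite <- vs_scalDl, Rplus_0_r, vs_add0. reflexivity.
Qed.

Lemma vs_scalN1 x : vs_scal (-1) x = vs_opp x.
Proof.
apply (vs_addIl x). rewrite vs_addN.
rewrite <- (vs_scal1 _ x) at 1. rewrite <- vs_scalDl.
replace (1 + -1) with 0 by ring. apply vs_scal0.
Qed.

Lemma ns_memN (V : NormedSubspace X) x : ns_mem V x -> ns_mem V (vs_opp x).
Proof. intro Vx. rewrite <- vs_scalN1. apply ns_memZ, Vx. Qed.

Lemma ns_memB (V : NormedSubspace X) x y :
  ns_mem V x -> ns_mem V y -> ns_mem V (vs_sub x y).
Proof. intros Vx Vy. apply ns_memD; [exact Vx | apply ns_memN, Vy]. Qed.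

End VectorSpace.

Section Translation.
Context {X : RVS} {le : X -> X -> Prop} (Hle : linear_preorder X le).
Implicit Types a b c d t x y : X.

Lemma linear_preorder_flip : linear_preorder X (fun x y => le y x).
Proof.
destruct Hle as [Hrefl [Htrans [Hadd Hscal]]].
repeat split; eauto.
Qed.

Lemma le_refl a : le a a.
Proof. destruct Hle as [H _]. apply H. Qed.

Lemma le_trans a b c : le a b -> le b c -> le a c.
Proof. destruct Hle as [_ [H _]]. apply H. Qed.

Lemma le_addr t a b : le a b -> le (vs_add a t) (vs_add b t).
Proof.
destruct Hle as [_ [_ [H _]]]. intro Hab.
rewrite (vs_addC _ a), (vs_addC _ b). apply H, Hab.
Qed.

Lemma le_add_nonneg x t : le vs_zero t -> le x (vs_add x t).
Proof.
destruct Hle as [_ [_ [H _]]]. intro Ht.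
rewrite <- (vs_add0 _ x) at 1. apply H, Ht.
Qed.

Lemma le_sub_nonneg x t : le vs_zero t -> le (vs_sub x t) x.
Proof. intro Ht. rewrite <- (vs_subK x t) at 2. apply le_add_nonneg, Ht. Qed.

Lemma subr_ge0 a b : le a b -> le vs_zero (vs_sub b a).
Proof. intro Hab. rewrite <- (vs_addN _ a). apply le_addr, Hab. Qed.

Lemma is_lub_in_shift (V : NormedSubspace X) t a b c :
  ns_mem V t -> is_lub_in le (ns_mem V) (vs_add a t) (vs_add b t) c ->
  is_lub_in le (ns_mem V) a b (vs_sub c t).
Proof.
intros Vt [Vc [Hac [Hbc Hc]]].
repeat split.
- apply ns_memB; assumption.
- rewrite <- (vs_addK a t). apply le_addr, Hac.
- rewrite <- (vs_addK b t). apply le_addr, Hbc.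
- intros d Vd Had Hbd.
  rewrite <- (vs_addK d t). apply le_addr, Hc.
  + apply ns_memD; assumption.
  + apply le_addr, Had.
  + apply le_addr, Hbd.
Qed.

End Translation.

Lemma is_glb_in_shift {X : RVS} {le : X -> X -> Prop} (Hle : linear_preorder X le)
  (V : NormedSubspace X) t a b c :
  ns_mem V t -> is_glb_in le (ns_mem V) (vs_add a t) (vs_add b t) c ->
  is_glb_in le (ns_mem V) a b (vs_sub c t).
Proof. exact (is_lub_in_shift (linear_preorder_flip Hle) V t a b c). Qed.

Section Cones.
Variable U : GradientSpace.
Variable le : gs_Vt U -> gs_Vt U -> Prop.
Hypothesis Hle : linear_preorder (gs_Vt U) le.

Local Notation V := (ns_mem (gs_V U)).
Local Notation Vp := (Vplus U le).
Local Notation V0 := (Vzero U le).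

Lemma Vplus_Vzero v : Vp v -> V0 v.
Proof.
intros [Vv Pv]. split; [exact Vv |].
exists v. split; [split; assumption | apply (le_refl Hle)].
Qed.

Lemma Vzero_sub_nonneg v t : Vp v -> V t -> le vs_zero t -> V0 (vs_sub v t).
Proof.
intros [Vv Pv] Vt Pt. split; [apply ns_memB; assumption |].
exists v. split; [split; assumption | apply (le_sub_nonneg Hle); assumption].
Qed.

Lemma lub_Vplus_lub_V x y c : le vs_zero x -> is_lub_in le Vp x y c -> is_lub_in le V x y c.
Proof.
intros Px [[Vc _] [Hxc [Hyc Hc]]].
repeat split; auto.
intros d Vd Hxd Hyd. apply Hc; auto.
split; [exact Vd | apply (le_trans Hle _ x); assumption].
Qed.

Lemma glb_Vplus_glb_V x y m : is_lattice le Vp -> Vp x -> Vp y ->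
  is_glb_in le Vp x y m -> is_glb_in le V x y m.
Proof.
intros HL [Vx Px] [Vy Py] [[Vm _] [Hmx [Hmy Hm]]].
repeat split; auto.
intros w Vw Hwx Hwy.
pose (s := vs_sub x w).
assert (Vs : V s) by (apply ns_memB; assumption).
assert (Ps : le vs_zero s) by (apply (subr_ge0 Hle); assumption).
assert (Hws : vs_add w s = x).
{ unfold s. rewrite vs_addC. apply vs_subK. }
assert (Hxs : Vp (vs_add x s)).
{ split; [apply ns_memD; assumption |].
  apply (le_trans Hle _ x); [| apply (le_add_nonneg Hle)]; assumption. }
assert (Hys : Vp (vs_add y s)).
{ split; [apply ns_memD; assumption |].
  apply (le_trans Hle _ y); [| apply (le_add_nonneg Hle)]; assumption. }
destruct (HL _ _ Hxs Hys) as [_ [g [[Vg _] [Hgx [Hgy Hg]]]]].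
assert (Hsg : le s g).
{ apply Hg; [split; assumption | |];
    rewrite <- (vs_add0l s) at 1; apply (le_addr Hle); assumption. }
assert (Hxg : le x g).
{ apply Hg; [split; assumption | apply (le_add_nonneg Hle), Ps |].
  rewrite <- Hws. apply (le_addr Hle), Hwy. }
assert (Hgm : le (vs_sub g s) m).
{ apply Hm.
  - split; [apply ns_memB | apply (subr_ge0 Hle)]; assumption.
  - rewrite <- (vs_addK x s). apply (le_addr Hle), Hgx.
  - rewrite <- (vs_addK y s). apply (le_addr Hle), Hgy. }
apply (le_trans Hle _ (vs_sub g s)); [| exact Hgm].
rewrite <- (vs_addK w s), Hws. apply (le_addr Hle), Hxg.
Qed.

Lemma Vzero_common_shift a b : V0 a -> V0 b ->
  exists t, V t /\ le vs_zero t /\ Vp (vs_add a t) /\ Vp (vs_add b t).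
Proof.
intros [Va [p [[Vp' Pp] Hap]]] [Vb [q [[Vq Pq] Hbq]]].
exists (vs_add (vs_sub p a) (vs_sub q b)).
assert (Pa : le vs_zero (vs_sub p a)) by (apply (subr_ge0 Hle); assumption).
assert (Pb : le vs_zero (vs_sub q b)) by (apply (subr_ge0 Hle); assumption).
repeat split.
- apply ns_memD; apply ns_memB; assumption.
- apply (le_trans Hle _ (vs_sub p a)); [| apply (le_add_nonneg Hle)]; assumption.
- apply ns_memD; [| apply ns_memD; apply ns_memB]; assumption.
- rewrite vs_addA, (vs_addC _ a), vs_subK.
  apply (le_trans Hle _ p); [| apply (le_add_nonneg Hle)]; assumption.
- apply ns_memD; [| apply ns_memD; apply ns_memB]; assumption.
- rewrite (vs_addC _ (vs_sub p a)), vs_addA, (vs_addC _ b), vs_subK.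
  apply (le_trans Hle _ q); [| apply (le_add_nonneg Hle)]; assumption.
Qed.

Lemma Vzero_lattice_of_Vplus : is_lattice le Vp -> is_lattice le V0.
Proof.
intros HL a b Za Zb.
destruct (Vzero_common_shift a b Za Zb) as [t [Vt [Pt [Hat Hbt]]]].
destruct (HL _ _ Hat Hbt) as [[l Hl] [g Hg]].
split.
- exists (vs_sub l t).
  apply (is_lub_in_sub le V0 V); [now intros x [] | |].
  + apply Vzero_sub_nonneg; [apply Hl | assumption | assumption].
  + apply (is_lub_in_shift Hle); [exact Vt |].
    apply lub_Vplus_lub_V; [apply Hat | exact Hl].
- exists (vs_sub g t).
  apply (is_glb_in_sub le V0 V); [now intros x [] | |].
  + apply Vzero_sub_nonneg; [apply Hg | assumption | assumption].
  + apply (is_glb_in_shift Hle); [exact Vt |].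
    apply glb_Vplus_glb_V; assumption.
Qed.

Lemma Vplus_lattice_of_Vzero : is_lattice le V0 -> is_lattice le Vp.
Proof.
intros HL a b Pa Pb.
pose proof (Vplus_Vzero a Pa) as Za. pose proof (Vplus_Vzero b Pb) as Zb.
destruct (HL _ _ Za Zb) as [[l Hl] [g Hg]].
split.
- exists l. apply (is_lub_in_sub le Vp V0); [exact Vplus_Vzero | |exact Hl].
  destruct Hl as [[Vl _] [Hal _]].
  split; [exact Vl | apply (le_trans Hle _ a); [apply Pa | exact Hal]].
- (* the V_0-join of g and 0 is the V_+-meet of a and b *)
  assert (Z0 : V0 vs_zero).
  { apply Vplus_Vzero. split; [apply ns_mem0 | apply (le_refl Hle)]. }
  destruct Hg as [Zg [Hga [Hgb Hg]]].
  destruct (HL _ _ Zg Z0) as [[h [Zh [Hgh [H0h Hh]]]] _].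
  exists h. repeat split.
  + apply Zh.
  + exact H0h.
  + apply Hh; [exact Za | exact Hga | apply Pa].
  + apply Hh; [exact Zb | exact Hgb | apply Pb].
  + intros d Pd Hda Hdb.
    apply (le_trans Hle _ g); [apply Hg; [apply Vplus_Vzero|..] | ]; assumption.
Qed.

End Cones.

Theorem mainTheorem18 (U : GradientSpace) (le : gs_Vt U -> gs_Vt U -> Prop)
  (Hord : ordered_gradient_space U le) :
  (is_lattice le (Vzero U le) <-> is_lattice le (Vplus U le)) /\
  (is_lattice le (Vplus U le) ->
   forall u1 u2, Vplus U le u1 -> Vplus U le u2 ->
     (forall m, is_lub_in le (Vplus U le) u1 u2 m ->
        forall v, ns_mem (gs_V U) v -> le u1 v -> le u2 v -> le m v) /\
     (forall m, is_glb_in le (Vplus U le) u1 u2 m ->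
        forall v, ns_mem (gs_V U) v -> le v u1 -> le v u2 -> le v m)).
Proof.
destruct Hord as [[Hle _] _].
split; [split; [apply Vplus_lattice_of_Vzero | apply Vzero_lattice_of_Vplus]; exact Hle |].
intros HL u1 u2 P1 P2. split.
- intros m Hm. apply (lub_Vplus_lub_V U le Hle u1 u2 m); [apply P1 | exact Hm].
- intros m Hm. apply (glb_Vplus_glb_V U le Hle u1 u2 m); assumption.
Qed.
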